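(* Let $\mathcal{P}_n$ be a geometric lattice of rank two with $n$ atoms (the lattice of flats of the uniform matroid $U_{2,n}$). Then $\mathcal{M}(\mathcal{P}_n,t)=(t^2-nt+1)(t+1)^2(t-1)^2$.
   Context: $\mathcal{P}_n$ consists of $\hat 0$ (rank 0), $n$ atoms (rank 1) and $\hat 1$ (rank 2). For a finite ranked poset $\mathcal{P}$, $\mathrm{rk}(\mathcal{P})$ is the maximum rank and $\rho(x,y,z)=3\,\mathrm{rk}(\mathcal{P})-\mathrm{rk}(x)-\mathrm{rk}(y)-\mathrm{rk}(z)$. Let $\delta_3(x,y,z)=1$ if $x=y=z$ and $0$ otherwise, and $J$ the unique integer-valued function on triples $x\le y\le z$ with $\sum_{x\le a\le y\le b\le z}J(a,y,b)=\delta_3(x,y,z)$ for all $x\le y\le z$. Then $\mathcal{M}(\mathcal{P},t)=\sum_{x\le y\le z}J(x,y,z)\,t^{\rho(x,y,z)}$. *)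

From mathcomp Require Import all_boot all_order all_algebra.
Set Implicit Arguments. Unset Strict Implicit. Unset Printing Implicit Defensive.
Import GRing.Theory.
Local Open Scope ring_scope.

(* The poset P_n, carried by 'I_(n+2):
   0 is \hat 0 (rank 0), 1..n are the n atoms (rank 1), n+1 is \hat 1 (rank 2). *)
Definition Pn (n : nat) := 'I_n.+2.

Definition pn_le (n : nat) (x y : Pn n) : bool :=
  [|| x == y, val x == 0%N | val y == n.+1].

Definition pn_rk (n : nat) (x : Pn n) : nat :=
  if val x == 0%N then 0%N else if val x == n.+1 then 2%N else 1%N.

Definition pn_rkP (n : nat) : nat := (\max_(x : Pn n) pn_rk x)%N.

Definition pn_rho (n : nat) (x y z : Pn n) : nat :=
  (3 * pn_rkP n - pn_rk x - pn_rk y - pn_rk z)%N.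

Definition delta3 (n : nat) (x y z : Pn n) : int :=
  ((x == y) && (y == z))%:R.

Definition IsJ (n : nat) (J : Pn n -> Pn n -> Pn n -> int) : Prop :=
  forall x y z : Pn n, pn_le x y -> pn_le y z ->
    \sum_(a : Pn n | pn_le x a && pn_le a y)
      \sum_(b : Pn n | pn_le y b && pn_le b z) J a y b = delta3 x y z.

Definition Mpoly (n : nat) (J : Pn n -> Pn n -> Pn n -> int) : {poly int} :=
  \sum_(x : Pn n) \sum_(y : Pn n) \sum_(z : Pn n | pn_le x y && pn_le y z)
     (J x y z)%:P * 'X^(pn_rho x y z).

From mathcomp Require Import all_boot all_order all_algebra.
From mathcomp Require Import zify ring.
Set Implicit Arguments. Unset Strict Implicit. Unset Printing Implicit Defensive.
Import GRing.Theory.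
Local Open Scope ring_scope.

(* For fixed y, the defining relation says that the double sums of J(., y, .)
   over the rectangles [x, y] x [y, z] form a delta function, so Mobius inversion
   in x and then in z forces J(x, y, z) = mu(x, y) mu(y, z); conversely this
   product satisfies the relation.  As rho(x, y, z) is the sum of the coranks of
   x, y and z, M(P, t) factors as
   sum_y t^{cork y} (sum_{x <= y} mu(x, y) t^{cork x}) (sum_{z >= y} mu(y, z) t^{cork z}).
   On P_n the bottom, the n atoms and the top contribute
   t^2 * t^2 * (t^2 - n t + n - 1), t * (t - t^2) * (t - 1) each, and
   (n - 1) t^2 - n t + 1, which add up to (t^2 - n t + 1)(t^2 - 1)^2. *)

Lemma sum_delta (R : nzSemiRingType) (T : finType) (P : pred T) (F : T -> R) y :
  P y -> \sum_(a | P a) F a * (a == y)%:R = F y.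
Proof.
move=> Py; rewrite (bigD1 y) //= eqxx mulr1 big1 ?addr0 // => a /andP[_ /negbTE->].
by rewrite mulr0.
Qed.

Lemma sum_andl (V : nmodType) (T : finType) (b : bool) (P : pred T) (F : T -> V) :
  \sum_(z | b && P z) F z = if b then \sum_(z | P z) F z else 0.
Proof. by case: b; rewrite ?big_pred0_eq. Qed.

Section MobiusInversion.
Variables (R : comNzRingType) (T : finType) (le : rel T).
Hypotheses (le_refl : reflexive le) (le_trans : transitive le).
Variable mu : T -> T -> R.
Hypothesis sum_mu_from :
  forall x y, le x y -> \sum_(a | le x a && le a y) mu x a = (x == y)%:R.
Hypothesis sum_mu_to :
  forall x y, le x y -> \sum_(a | le x a && le a y) mu a y = (x == y)%:R.

Lemma exchange_itv_lower (F : T -> T -> R) x y :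
  \sum_(a | le x a && le a y) \sum_(c | le a c && le c y) F a c =
  \sum_(c | le x c && le c y) \sum_(a | le x a && le a c) F a c.
Proof.
rewrite (exchange_big_dep (fun c => le x c && le c y)) => [|a c /andP[xa _] /andP[ac ->]];
  last by rewrite (le_trans xa ac).
apply: eq_bigr => c /andP[_ cy]; apply: eq_bigl => a.
apply/andP/andP => [[/andP[-> _] /andP[-> _]] // | [xa ac]].
by rewrite xa ac (le_trans ac cy).
Qed.

Lemma exchange_itv_upper (F : T -> T -> R) y z :
  \sum_(b | le y b && le b z) \sum_(c | le y c && le c b) F b c =
  \sum_(c | le y c && le c z) \sum_(b | le c b && le b z) F b c.
Proof.
rewrite (exchange_big_dep (fun c => le y c && le c z)) => [|b c /andP[_ bz] /andP[-> cb]];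
  last by rewrite (le_trans cb bz).
apply: eq_bigr => c /andP[yc _]; apply: eq_bigl => b.
apply/andP/andP => [[/andP[_ ->] /andP[_ ->]] // | [cb ->]].
by rewrite yc cb (le_trans yc cb).
Qed.

Lemma mobius_inversion_lower (f g : T -> R) y :
  (forall x, le x y -> g x = \sum_(a | le x a && le a y) f a) ->
  forall x, le x y -> f x = \sum_(a | le x a && le a y) mu x a * g a.
Proof.
move=> gE x xy.
under eq_bigr => a /andP[_ ay] do rewrite gE // mulr_sumr.
rewrite exchange_itv_lower -(sum_delta f (P := fun c => le x c && le c y)) ?le_refl //.
apply: eq_bigr => c /andP[xc _]; rewrite -mulr_suml sum_mu_from // mulrC.
by rewrite eq_sym.
Qed.

Lemma mobius_inversion_upper (f g : T -> R) y :
  (forall z, le y z -> g z = \sum_(b | le y b && le b z) f b) ->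
  forall z, le y z -> f z = \sum_(b | le y b && le b z) g b * mu b z.
Proof.
move=> gE z yz.
under eq_bigr => b /andP[yb _] do rewrite gE // mulr_suml.
rewrite exchange_itv_upper -(sum_delta f (P := fun c => le y c && le c z)) ?le_refl ?yz //.
apply: eq_bigr => c /andP[_ cz]; rewrite -mulr_sumr sum_mu_to //.
Qed.

Lemma mobius_prod_solution x y z : le x y -> le y z ->
  \sum_(a | le x a && le a y) \sum_(b | le y b && le b z) mu a y * mu y b =
  ((x == y) && (y == z))%:R.
Proof.
move=> xy yz; under eq_bigr do rewrite -mulr_sumr.
by rewrite -mulr_suml sum_mu_to // sum_mu_from // -natrM mulnb.
Qed.

Lemma mobius_prod_unique (J : T -> T -> T -> R) :
  (forall x y z, le x y -> le y z ->
    \sum_(a | le x a && le a y) \sum_(b | le y b && le b z) J a y b =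
    ((x == y) && (y == z))%:R) ->
  forall x y z, le x y -> le y z -> J x y z = mu x y * mu y z.
Proof.
move=> JE x y z xy yz.
pose F a w := \sum_(b | le y b && le b w) J a y b.
have FE a w : le a y -> le y w -> F a w = mu a y * (y == w)%:R.
  move=> ay yw.
  rewrite (@mobius_inversion_lower (F^~ w) (fun a => ((a == y) && (y == w))%:R) y) //.
    under eq_bigr do rewrite -mulnb natrM mulrA.
    by rewrite -mulr_suml sum_delta ?le_refl ?andbT.
  by move=> c cy; rewrite JE.
rewrite (@mobius_inversion_upper (J x y) (F x) y) //.
under eq_bigr => b /andP[yb _] do rewrite FE // mulrAC eq_sym.
by rewrite (sum_delta (fun b => mu x y * mu b z)) ?le_refl ?yz.
Qed.

End MobiusInversion.

Section Pn.
Variable n : nat.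
Implicit Types (x y z : Pn n) (i j : 'I_n).

Definition pn_bot : Pn n := ord0.
Definition pn_top : Pn n := ord_max.
Definition pn_atom i : Pn n := Ordinal (leqW (ltn_ord i) : (i.+1 < n.+2)%N).

Variant pn_spec : Pn n -> Type :=
| PnBot : pn_spec pn_bot
| PnAtom i : pn_spec (pn_atom i)
| PnTop : pn_spec pn_top.

Lemma pnP x : pn_spec x.
Proof.
case: x => [[|k] lt_k].
  by rewrite (_ : Ordinal lt_k = pn_bot); [constructor | apply: val_inj].
have [lt_kn | ge_kn] := ltnP k n.
  by rewrite (_ : Ordinal lt_k = pn_atom (Ordinal lt_kn)); [constructor | apply: val_inj].
rewrite (_ : Ordinal lt_k = pn_top); first by constructor.
by apply: val_inj => /=; lia.
Qed.

Lemma sum_pn (V : nmodType) (F : Pn n -> V) :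
  \sum_x F x = F pn_bot + \sum_i F (pn_atom i) + F pn_top.
Proof.
rewrite big_ord_recl big_ord_recr addrA.
congr (_ + _ + F _); last exact: val_inj.
by apply: eq_bigr => i _; congr F; apply: val_inj.
Qed.

Lemma sum_pn_cond (V : nmodType) (P : pred (Pn n)) (F : Pn n -> V) :
  \sum_(x | P x) F x = (if P pn_bot then F pn_bot else 0)
    + \sum_i (if P (pn_atom i) then F (pn_atom i) else 0)
    + (if P pn_top then F pn_top else 0).
Proof. by rewrite big_mkcond sum_pn. Qed.

Lemma pn_atom_eq i j : (pn_atom i == pn_atom j) = (i == j).
Proof. by rewrite -val_eqE. Qed.

Lemma pn_bot_eq_atom i : (pn_bot == pn_atom i) = false. Proof. by []. Qed.

Lemma pn_atom_eq1 i : (pn_atom i == pn_top) = false.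
Proof. by rewrite -val_eqE /= eqSS ltn_eqF. Qed.
Lemma pn_top_eq_atom i : (pn_top == pn_atom i) = false.
Proof. by rewrite eq_sym pn_atom_eq1. Qed.

Lemma pn_bot_eq1 : (pn_bot == pn_top) = false. Proof. by []. Qed.

Lemma pn_le0x x : pn_le pn_bot x. Proof. by rewrite /pn_le eqxx orbT. Qed.
Lemma pn_lex1 x : pn_le x pn_top. Proof. by rewrite /pn_le /= eqxx !orbT. Qed.

Lemma pn_le_atom i j : pn_le (pn_atom i) (pn_atom j) = (i == j).
Proof. by rewrite /pn_le pn_atom_eq /= eqSS ltn_eqF ?orbF. Qed.

Lemma pn_lex0 x : pn_le x pn_bot = (x == pn_bot).
Proof. by case: (pnP x). Qed.

Lemma pn_le1x x : pn_le pn_top x = (x == pn_top).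
Proof.
by case: (pnP x) => [|i|]; rewrite /pn_le ?pn_top_eq_atom ?pn_atom_eq1 ?eqxx //= eqSS ltn_eqF.
Qed.

Definition pnE := (pn_le0x, pn_lex1, pn_lex0, pn_le1x, pn_le_atom,
  pn_bot_eq_atom, pn_atom_eq1, pn_bot_eq1, eqxx).

Lemma pn_le_refl : reflexive (@pn_le n).
Proof. by move=> x; rewrite /pn_le eqxx. Qed.

Lemma pn_le_trans : transitive (@pn_le n).
Proof.
move=> y x z; case: (pnP x) => [|i|]; case: (pnP y) => [|j|]; case: (pnP z) => [|k|];
  rewrite ?pnE // => /eqP-> //.
Qed.

Lemma pn_leP x y : pn_le x y -> [\/ x = y, x = pn_bot | y = pn_top].
Proof.
case/or3P => [/eqP | x0 | y1]; [exact: Or31 | apply: Or32 | apply: Or33]; exact/val_inj/eqP.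
Qed.

Lemma pn_le_anti : antisymmetric (@pn_le n).
Proof.
move=> x y; case: (pnP x) => [|i|]; case: (pnP y) => [|j|]; rewrite ?pnE //=.
by case/andP => /eqP->.
Qed.

Section IntervalSums.
Variables (V : nmodType) (F : Pn n -> V).

Lemma pn_sum_itv_refl x : \sum_(a | pn_le x a && pn_le a x) F a = F x.
Proof.
rewrite (eq_bigl (pred1 x)) ?big_pred1_eq // => a /=.
by apply/idP/eqP => [/pn_le_anti | ->]; rewrite ?pn_le_refl.
Qed.

Lemma pn_sum_le0 : \sum_(a | pn_le a pn_bot) F a = F pn_bot.
Proof. by rewrite (eq_bigl (pred1 pn_bot)) ?big_pred1_eq // => a; rewrite pnE. Qed.

Lemma pn_sum_le_atom j : \sum_(a | pn_le a (pn_atom j)) F a = F pn_bot + F (pn_atom j).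
Proof.
rewrite sum_pn_cond !pnE addr0; under eq_bigr do rewrite pnE.
by rewrite -big_mkcond big_pred1_eq.
Qed.

Lemma pn_sum_le1 : \sum_(a | pn_le a pn_top) F a = \sum_a F a.
Proof. by apply: eq_bigl => a; rewrite pnE. Qed.

Lemma pn_sum_ge0 : \sum_(a | pn_le pn_bot a) F a = \sum_a F a.
Proof. by apply: eq_bigl => a; rewrite pnE. Qed.

Lemma pn_sum_ge_atom i : \sum_(a | pn_le (pn_atom i) a) F a = F (pn_atom i) + F pn_top.
Proof.
rewrite sum_pn_cond !pnE add0r; under eq_bigr do rewrite pnE eq_sym.
by rewrite -big_mkcond big_pred1_eq.
Qed.

Lemma pn_sum_ge1 : \sum_(a | pn_le pn_top a) F a = F pn_top.
Proof. by rewrite (eq_bigl (pred1 pn_top)) ?big_pred1_eq // => a; rewrite pnE. Qed.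

End IntervalSums.

(* Only the values on comparable pairs matter; two distinct atoms get -1. *)
Definition pn_mu x y : int :=
  if x == y then 1 else if (x == pn_bot) && (y == pn_top) then n%:R - 1 else -1.

Lemma pn_mu_refl x : pn_mu x x = 1.
Proof. by rewrite /pn_mu eqxx. Qed.

Lemma pn_mu0_atom i : pn_mu pn_bot (pn_atom i) = -1.
Proof. by rewrite /pn_mu !pnE. Qed.

Lemma pn_mu_atom1 i : pn_mu (pn_atom i) pn_top = -1.
Proof. by rewrite /pn_mu !pnE. Qed.

Lemma pn_mu01 : pn_mu pn_bot pn_top = n%:R - 1.
Proof. by rewrite /pn_mu !pnE. Qed.

Definition pn_muE := (pn_mu_refl, pn_mu0_atom, pn_mu_atom1, pn_mu01).

Lemma pn_sum_mu_from x y :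
  pn_le x y -> \sum_(a | pn_le x a && pn_le a y) pn_mu x a = (x == y)%:R.
Proof.
case/pn_leP => [-> | -> | ->]; first by rewrite pn_sum_itv_refl pn_mu_refl eqxx.
  under eq_bigl do rewrite pn_le0x.
  case: (pnP y) => [|j|]; rewrite ?pn_sum_le0 ?pn_sum_le_atom ?pn_sum_le1 ?sum_pn !pnE ?pn_muE //=.
  by under eq_bigr do rewrite pn_mu0_atom; rewrite sumr_const card_ord; ring.
under eq_bigl do rewrite pn_lex1 andbT.
case: (pnP x) => [|i|]; rewrite ?pn_sum_ge0 ?pn_sum_ge_atom ?pn_sum_ge1 ?sum_pn !pnE ?pn_muE //=.
by under eq_bigr do rewrite pn_mu0_atom; rewrite sumr_const card_ord; ring.
Qed.

Lemma pn_sum_mu_to x y :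
  pn_le x y -> \sum_(a | pn_le x a && pn_le a y) pn_mu a y = (x == y)%:R.
Proof.
case/pn_leP => [-> | -> | ->]; first by rewrite pn_sum_itv_refl pn_mu_refl eqxx.
  under eq_bigl do rewrite pn_le0x.
  case: (pnP y) => [|j|]; rewrite ?pn_sum_le0 ?pn_sum_le_atom ?pn_sum_le1 ?sum_pn !pnE ?pn_muE //=.
  by under eq_bigr do rewrite pn_mu_atom1; rewrite sumr_const card_ord; ring.
under eq_bigl do rewrite pn_lex1 andbT.
case: (pnP x) => [|i|]; rewrite ?pn_sum_ge0 ?pn_sum_ge_atom ?pn_sum_ge1 ?sum_pn !pnE ?pn_muE //=.
by under eq_bigr do rewrite pn_mu_atom1; rewrite sumr_const card_ord; ring.
Qed.

Definition pn_corank x : nat := (2 - pn_rk x)%N.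

Lemma pn_corank0 : pn_corank pn_bot = 2%N. Proof. by []. Qed.
Lemma pn_corank_atom i : pn_corank (pn_atom i) = 1%N.
Proof. by rewrite /pn_corank /pn_rk /= eqSS ltn_eqF. Qed.
Lemma pn_corank1 : pn_corank pn_top = 0%N.
Proof. by rewrite /pn_corank /pn_rk /= eqxx. Qed.

Lemma pn_rk_le2 x : (pn_rk x <= 2)%N.
Proof. by rewrite /pn_rk; case: ifP => // _; case: ifP. Qed.

Lemma pn_rkPE : pn_rkP n = 2%N.
Proof.
apply/anti_leq/andP; split; first by apply/bigmax_leqP => x _; apply: pn_rk_le2.
by have := @leq_bigmax _ (@pn_rk n) pn_top; rewrite /pn_rk /= eqxx.
Qed.

Lemma pn_rhoE x y z : pn_rho x y z = (pn_corank x + pn_corank y + pn_corank z)%N.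
Proof.
rewrite /pn_rho /pn_corank pn_rkPE.
by have := pn_rk_le2 x; have := pn_rk_le2 y; have := pn_rk_le2 z; lia.
Qed.

Definition pn_down_poly y : {poly int} :=
  \sum_(x | pn_le x y) (pn_mu x y)%:P * 'X^(pn_corank x).

Definition pn_up_poly y : {poly int} :=
  \sum_(z | pn_le y z) (pn_mu y z)%:P * 'X^(pn_corank z).

Lemma Mpoly_mu_factor :
  Mpoly (fun x y z => pn_mu x y * pn_mu y z) =
  \sum_y 'X^(pn_corank y) * pn_down_poly y * pn_up_poly y.
Proof.
rewrite /Mpoly exchange_big; apply: eq_bigr => y _.
rewrite -mulrA big_distrlr mulr_sumr [RHS]big_mkcond; apply: eq_bigr => x _.
rewrite sum_andl; case: ifP => // _; rewrite mulr_sumr; apply: eq_bigr => z _.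
by rewrite /= pn_rhoE !exprD polyCM; ring.
Qed.

Definition polyCE := (rmorphB, rmorphN, rmorph1, rmorph_nat).

Lemma pn_down_poly0 : pn_down_poly pn_bot = 'X^2.
Proof. by rewrite /pn_down_poly pn_sum_le0 pn_mu_refl mul1r. Qed.

Lemma pn_down_poly_atom i : pn_down_poly (pn_atom i) = 'X - 'X^2.
Proof.
by rewrite /pn_down_poly pn_sum_le_atom !pn_muE pn_corank_atom !polyCE; ring.
Qed.

Lemma pn_down_poly1 : pn_down_poly pn_top = (n%:R - 1) * 'X^2 - n%:R * 'X + 1.
Proof.
rewrite /pn_down_poly pn_sum_le1 sum_pn !pn_muE pn_corank1 !polyCE.
under eq_bigr do rewrite pn_mu_atom1 pn_corank_atom !polyCE.
by rewrite sumr_const card_ord; ring.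
Qed.

Lemma pn_up_poly0 : pn_up_poly pn_bot = 'X^2 - n%:R * 'X + (n%:R - 1).
Proof.
rewrite /pn_up_poly pn_sum_ge0 sum_pn !pn_muE pn_corank0 pn_corank1 !polyCE.
under eq_bigr do rewrite pn_mu0_atom pn_corank_atom !polyCE.
by rewrite sumr_const card_ord; ring.
Qed.

Lemma pn_up_poly_atom i : pn_up_poly (pn_atom i) = 'X - 1.
Proof.
by rewrite /pn_up_poly pn_sum_ge_atom !pn_muE pn_corank_atom pn_corank1 !polyCE; ring.
Qed.

Lemma pn_up_poly1 : pn_up_poly pn_top = 1.
Proof. by rewrite /pn_up_poly pn_sum_ge1 pn_mu_refl pn_corank1 mul1r. Qed.

Lemma Mpoly_mu :
  Mpoly (fun x y z => pn_mu x y * pn_mu y z) =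
  ('X^2 - n%:R *: 'X + 1) * ('X + 1) ^+ 2 * ('X - 1) ^+ 2.
Proof.
rewrite Mpoly_mu_factor sum_pn pn_down_poly0 pn_up_poly0 pn_down_poly1 pn_up_poly1.
under eq_bigr do rewrite pn_down_poly_atom pn_up_poly_atom pn_corank_atom.
by rewrite sumr_const card_ord pn_corank0 pn_corank1 -mul_polyC polyCE; ring.
Qed.

Lemma Mpoly_eq_on_chains (J J' : Pn n -> Pn n -> Pn n -> int) :
  (forall x y z, pn_le x y -> pn_le y z -> J x y z = J' x y z) ->
  Mpoly J = Mpoly J'.
Proof.
move=> JE; apply: eq_bigr => x _; apply: eq_bigr => y _.
by apply: eq_bigr => z /andP[xy yz]; rewrite JE.
Qed.

End Pn.

Theorem proposition6p9 (n : nat) (hn : (2 <= n)%N) :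
  (exists J, @IsJ n J) /\
  forall J : Pn n -> Pn n -> Pn n -> int, @IsJ n J ->
    @Mpoly n J = ('X^2 - n%:R *: 'X + 1) * ('X + 1) ^+ 2 * ('X - 1) ^+ 2.
Proof.
split.
  exists (fun x y z => pn_mu x y * pn_mu y z).
  exact: mobius_prod_solution (@pn_sum_mu_from n) (@pn_sum_mu_to n).
move=> J HJ; rewrite -Mpoly_mu; apply: Mpoly_eq_on_chains => x y z.
exact: (mobius_prod_unique (R := int) (@pn_le_refl n) (@pn_le_trans n)
  (@pn_sum_mu_from n) (@pn_sum_mu_to n) HJ).
Qed.
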